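(* Let $c>0$ and let $G$ be an $n$-vertex graph. If $\delta^{(2)}(G)\ge cn$, then $\hat\delta^{(2,2)}(G)\ge 2-1/c$.
   Context: $\delta^{(2)}(G)=\min\{|N(u)\cap N(v)|: u\ne v,\ uv\notin E(G)\}$. $\hat\delta^{(2,2)}(G)$ is the minimum, over all pairs of distinct non-adjacent vertices $u,v$, of the edge density $e(G[N(u)\cap N(v)])/\binom{|N(u)\cap N(v)|}{2}$ of the subgraph induced on their common neighborhood. *)

From HB Require Import structures.
From mathcomp Require Import all_boot all_order all_algebra.
Set Implicit Arguments. Unset Strict Implicit. Unset Printing Implicit Defensive.
Import Order.TTheory GRing.Theory Num.Theory.
Local Open Scope ring_scope.

Definition simple_graph (T : finType) (e : rel T) : Prop :=
  symmetric e /\ irreflexive e.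

Definition common_nbhd (T : finType) (e : rel T) (u v : T) : {set T} :=
  [set w | e u w && e v w].

Definition induced_edges (T : finType) (e : rel T) (S : {set T}) : nat :=
  #|[set E : {set T} | (E \subset S) &&
       [exists x : T, exists y : T, [&& x != y, e x y & E == [set x; y]]]]|.

(* Edge density e(G[S]) / binom(|S|,2) (MathComp convention x / 0 = 0). *)
Definition induced_density (R : realFieldType) (T : finType) (e : rel T)
  (S : {set T}) : R :=
  (induced_edges e S)%:R / ('C(#|S|, 2)%N)%:R.

Definition min_codeg_ge (R : realFieldType) (T : finType) (e : rel T) (a : R) : Prop :=
  forall u v : T, u != v -> ~~ e u v -> a <= (#|common_nbhd e u v|)%:R.

Definition min_codeg_density_ge (R : realFieldType) (T : finType) (e : rel T) (a : R) : Prop :=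
  forall u v : T, u != v -> ~~ e u v -> a <= induced_density R e (common_nbhd e u v).

From HB Require Import structures.
From mathcomp Require Import all_boot all_order all_algebra.
From mathcomp Require Import ring lra.
Set Implicit Arguments.
Unset Strict Implicit.
Unset Printing Implicit Defensive.
Import Order.TTheory GRing.Theory Num.Theory.
Local Open Scope ring_scope.

(* Let S = N(u) ∩ N(v) for non-adjacent u, v, so |S| >= cn.  A vertex x of S
   is either adjacent to all of S \ {x}, or has a non-neighbour y in S; then
   N(x) ∩ N(y) lies in (N(x) ∩ S) ∪ (V \ S), so x has at least
   cn - (n - |S|) >= (|S| - 1)(2 - 1/c) neighbours in S.  Summing these degrees
   over S counts every edge of G[S] twice, which gives the density bound. *)

Lemma eq_set2 (T : finType) (a b x y : T) : x != y ->
  ([set a; b] == [set x; y]) = ((a, b) == (x, y)) || ((a, b) == (y, x)).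
Proof.
move=> xy; apply/eqP/idP => [ab_xy | /orP [] /eqP [-> ->] //]; last first.
  by rewrite setUC.
have /set2P xab : x \in [set a; b] by rewrite ab_xy set21.
have /set2P yab : y \in [set a; b] by rewrite ab_xy set22.
by case: xab yab => ? [] ?; subst; rewrite ?eqxx ?orbT //; rewrite eqxx in xy.
Qed.

Lemma codeg_degree_bound (R : realFieldType) (c n s d : R) :
  1 <= 2 * c -> c <= 1 -> c * n <= s -> c * n + s <= d + n ->
  (s - 1) * (2 - c^-1) <= d.
Proof.
move=> c_ge_half c_le1 s_ge d_ge.
(* c d - (s - 1)(2c - 1) = c (d + n - cn - s) + (1 - c)(s - cn) + (2c - 1) *)
have c_gt0 : 0 < c by lra.
rewrite -(ler_pM2l c_gt0) mulrCA mulrBr mulfV ?gt_eqF //.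
nra.
Qed.

Section InducedSubgraph.
Variables (T : finType) (e : rel T).

Definition nbhd_in (S : {set T}) (x : T) : {set T} := [set y in S | e x y].

Lemma common_nbhd_subset (S : {set T}) (x y : T) :
  common_nbhd e x y \subset nbhd_in S x :|: ~: S.
Proof.
apply/subsetP => z; rewrite !inE => /andP [exz _].
by rewrite exz andbT; case: (z \in S).
Qed.

Lemma card_common_nbhd_le (S : {set T}) (x y : T) :
  (#|common_nbhd e x y| + #|S| <= #|nbhd_in S x| + #|T|)%N.
Proof.
rewrite -(cardsC S) [(#|S| + _)%N]addnC addnA leq_add2r.
apply: leq_trans (subset_leq_card (common_nbhd_subset S x y)) _.
exact: leq_card_setU.
Qed.

Lemma card_nbhd_in_complete (S : {set T}) (x : T) :
  x \in S -> {in S, forall y, y != x -> e x y} -> (#|S|.-1 <= #|nbhd_in S x|)%N.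
Proof.
move=> xS Sx; rewrite (cardsD1 x S) xS add1n /=.
apply/subset_leq_card/subsetP => y; rewrite !inE => /andP [yx yS].
by rewrite yS Sx.
Qed.

Lemma card_nbhd_in_ge_min_codeg (R : realFieldType) (c : R) (S : {set T}) (x : T) :
  min_codeg_ge e (c * #|T|%:R) -> 1 <= 2 * c -> c * #|T|%:R <= #|S|%:R -> x \in S ->
  (#|S|%:R - 1) * (2 - c^-1) <= #|nbhd_in S x|%:R.
Proof.
move=> codeg_ge c_ge_half S_ge xS.
have S_le : #|S|%:R <= #|T|%:R :> R by rewrite ler_nat max_card.
have T_gt0 : 0 < #|T|%:R :> R by rewrite ltr0n; apply/card_gt0P; exists x.
have c_le1 : c <= 1 by rewrite -(ler_pM2r T_gt0) mul1r (le_trans S_ge).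
have c_gt0 : 0 < c by lra.
case: (pickP (fun y => [&& y \in S, y != x & ~~ e x y])) =>
  [y /and3P [yS yx nexy] | x_complete].
- apply: (codeg_degree_bound c_ge_half c_le1 S_ge).
  have := card_common_nbhd_le S x y; rewrite -(ler_nat R) !natrD; apply: le_trans.
  by rewrite lerD2r codeg_ge // eq_sym.
- have S_gt0 : (0 < #|S|)%N by apply/card_gt0P; exists x.
  have : (#|S|.-1 <= #|nbhd_in S x|)%N.
    apply: card_nbhd_in_complete => // y yS yx.
    by have := x_complete y; rewrite yS yx /= => /negbFE.
  rewrite -(ler_nat R) -subn1 natrB // mulr1n; apply: le_trans.
  have inv_c_ge1 : 1 <= c^-1 by rewrite invf_ge1 // c_gt0.
  by rewrite ler_piMr ?subr_ge0 ?ler1n //; lra.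
Qed.

Hypotheses (esym : symmetric e) (eirr : irreflexive e).

Lemma induced_edges_double (S : {set T}) :
  (2 * induced_edges e S = \sum_(x in S) #|nbhd_in S x|)%N.
Proof.
pose P (p : T * T) := [&& p.1 \in S, p.2 \in S & e p.1 p.2].
have -> : (\sum_(x in S) #|nbhd_in S x| = \sum_(p | P p) 1)%N.
  rewrite -(pair_big_dep (mem S) (fun x y => (y \in S) && e x y) (fun _ _ => 1%N)) /=.
  by apply: eq_bigr => x _; rewrite -sum1_card; apply: eq_bigl => y; rewrite inE.
rewrite /induced_edges -sum1_card.
set Es := finset _.
rewrite (partition_big (fun p => [set p.1; p.2]) (mem Es)) /=; last first.
  case=> x y /and3P [xS yS exy]; rewrite inE; apply/andP; split.
    by apply/subsetP => z /set2P [] ->.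
  apply/existsP; exists x; apply/existsP; exists y; rewrite exy eqxx !andbT.
  by apply: contraTneq exy => ->; rewrite eirr.
rewrite big_distrr /=; apply: eq_bigr => E.
rewrite inE => /andP [ES /existsP [x /existsP [y /and3P [xy exy /eqP E_xy]]]].
subst E; have xS := subsetP ES x (set21 x y); have yS := subsetP ES y (set22 x y).
rewrite muln1 (eq_bigl (mem [set (x, y); (y, x)])) ?sum1_card ?cards2.
  by rewrite xpair_eqE negb_and xy.
case=> a b; rewrite /P /= eq_set2 // !inE.
apply/idP/idP => [/andP [] // | pair_xy]; rewrite pair_xy andbT.
by case/orP: pair_xy => /eqP [-> ->]; rewrite xS yS /= ?exy // esym.
Qed.

Lemma induced_density_ge (R : realFieldType) (S : {set T}) (a : R) :
  (1 < #|S|)%N -> {in S, forall x, (#|S|%:R - 1) * a <= #|nbhd_in S x|%:R} ->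
  a <= induced_density R e S.
Proof.
move=> S_gt1 deg_ge; rewrite /induced_density ler_pdivlMr ?ltr0n ?bin_gt0 //.
have bin2E : ('C(#|S|, 2) * 2 = #|S| * #|S|.-1)%N by rewrite mulnC -mul_bin_diag bin1.
have pred_S : #|S|.-1%:R = #|S|%:R - 1 :> R by rewrite -subn1 natrB 1?ltnW.
rewrite -(ler_pM2r (ltr0n R 2)) -mulrA -!natrM bin2E.
rewrite [(induced_edges _ _ * 2)%N]mulnC induced_edges_double.
rewrite natrM pred_S natr_sum.
have -> : a * (#|S|%:R * (#|S|%:R - 1)) = \sum_(x in S) (#|S|%:R - 1) * a :> R.
  by rewrite sumr_const -mulr_natr; ring.
exact: ler_sum.
Qed.

End InducedSubgraph.

Unset Implicit Arguments.

Theorem proposition4p4 (R : realFieldType) (T : finType) (e : rel T) (c : R) :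
  simple_graph e -> 0 < c ->
  min_codeg_ge e (c * (#|T|)%:R) ->
  min_codeg_density_ge e (2 - c^-1).
Proof.
move=> [esym eirr] c_gt0 codeg_ge u v uv nuv.
set S := common_nbhd e u v.
have [k_le0 | k_gt0] := lerP (2 - c^-1) 0.
  by apply: le_trans k_le0 _; rewrite divr_ge0 ?ler0n.
have c_gt_half : 1 < 2 * c.
  by have := mulr_gt0 c_gt0 k_gt0; rewrite mulrBr mulfV ?gt_eqF // subr_gt0 mulrC.
have S_ge : c * #|T|%:R <= #|S|%:R := codeg_ge u v uv nuv.
have T_ge2 : 2 <= #|T|%:R :> R.
  by rewrite ler_nat (leq_trans _ (max_card [set u; v])) // cards2 uv.
apply: (induced_density_ge esym eirr) => [|x xS].
- by rewrite -(ltr_nat R); nra.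
- by apply: card_nbhd_in_ge_min_codeg => //; lra.
Qed.
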